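(* Let $l\ge1$ and $\mu\ge0$ be integers. Then the Schur–Szegő composition of entire functions $$U:=\underbrace{e^xx*\cdots*e^xx}_{l\text{ factors}}*e^x(x-1)*e^x(x-2)*\cdots*e^x(x-\mu)$$ is of the form $e^xY$, where $Y$ is a polynomial of degree $l+\mu$ having a root of multiplicity $\mu+1$ at $0$ and $l-1$ simple negative roots.
   Context: Schur–Szegő composition of entire functions: for $f=\sum_{j\ge0}\gamma_jx^j/j!$ and $g=\sum_{j\ge0}\delta_jx^j/j!$ (everywhere convergent series) one sets $f*g=\sum_{j\ge0}\gamma_j\delta_jx^j/j!$; it is commutative and associative. *)

From HB Require Import structures.
From mathcomp Require Import all_boot all_order all_algebra.
From mathcomp Require Import all_classical all_reals all_analysis.
Set Implicit Arguments. Unset Strict Implicit. Unset Printing Implicit Defensive.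
Import Order.TTheory GRing.Theory Num.Theory.
Local Open Scope ring_scope.

(* An entire function f = \sum_j gamma_j x^j / j! is represented by its
   sequence of "exponential" coefficients gamma : nat -> R. *)

Definition egf_partial {R : realType} (gamma : nat -> R) (x : R) : nat -> R :=
  series (fun j => gamma j * x ^+ j / (j`!)%:R).

(* Schur–Szegő composition: f * g = \sum_j gamma_j delta_j x^j / j!. *)
Definition ssz {R : realType} (gamma delta : nat -> R) : nat -> R :=
  fun j => gamma j * delta j.

(* Iterated composition f_1 * f_2 * ... * f_n (the empty composition is e^x,
   whose coefficients are all 1, the neutral element). *)
Definition ssz_list {R : realType} (fs : seq (nat -> R)) : nat -> R :=
  foldr ssz (fun _ => 1) fs.

(* Exponential coefficients of e^x p(x) for a polynomial p:
   e^x x^i = \sum_j j (j-1) ... (j-i+1) x^j / j!, hence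
   gamma_j = \sum_i p_i * j^_i (falling factorial). *)
Definition expPolyCoef {R : realType} (p : {poly R}) : nat -> R :=
  fun j => \sum_(i < size p) p`_i * (j ^_ i)%:R.

Definition U_coef {R : realType} (l mu : nat) : nat -> R :=
  ssz_list (nseq l (expPolyCoef 'X) ++
            [seq expPolyCoef ('X - k%:R%:P) | k <- iota 1 mu]).

From HB Require Import structures.
From mathcomp Require Import all_boot all_order all_algebra.
From mathcomp Require Import all_classical all_reals all_analysis.
From mathcomp Require Import ring zify polyrcf.
Set Implicit Arguments. Unset Strict Implicit. Unset Printing Implicit Defensive.
Import Order.TTheory GRing.Theory Num.Theory.
Import numFieldNormedType.Exports.
Local Open Scope classical_set_scope.
Local Open Scope ring_scope.

(* The exponential coefficients of e^x p are j |-> \sum_i p_i j^_i, and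
   multiplying them by j is the Euler operator x d/dx, acting on p as
   p |-> x (p + p').  The coefficients of U are j^l (j - 1) ... (j - mu) =
   j^(l-1) j^_(mu+1), so Y = (x (1 + d/dx))^(l-1) x^(mu+1) = x^(mu+1) Z_(l-1),
   where Z_0 = 1 and Z_(k+1) = (x + mu + 1) Z_k + x Z_k'.  If Z_k has k simple
   negative roots, Z_(k+1) takes the value z Z_k'(z) at each of them, with
   alternating signs, and is positive at 0: this gives k interlacing roots,
   and the last one is real and smaller than all of them by a sign count. *)

Section ExpPolyCoef.
Variable R : realType.
Implicit Types (p : {poly R}) (j k m : nat).

Lemma expPolyCoef_widen p N j : (size p <= N)%N ->
  expPolyCoef p j = \sum_(i < N) p`_i * (j ^_ i)%:R.
Proof.
move=> leN; rewrite /expPolyCoef (big_ord_widen _ (fun i => p`_i * (j ^_ i)%:R) leN).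
rewrite big_mkcond /=; apply: eq_bigr => i _; case: ifP => // /negbT.
by rewrite -leqNgt => le_p_i; rewrite nth_default // mul0r.
Qed.

Lemma muln_ffact j i : (j * j ^_ i = j ^_ i.+1 + i * j ^_ i)%N.
Proof.
rewrite ffactnSr; have [le_ij|lt_ji] := leqP i j.
  by rewrite [(i * _)%N]mulnC -mulnDr subnK // mulnC.
by rewrite ffact_small // !muln0 mul0n.
Qed.

(* e^x * euler_exp p = x * (e^x * p)' *)
Definition euler_exp p : {poly R} := 'X * (p + p^`()).

Lemma expPolyCoef_euler p j : expPolyCoef (euler_exp p) j = j%:R * expPolyCoef p j.
Proof.
set N := size p.
have size_euler : (size (euler_exp p) <= N.+1)%N.
  apply: (leq_trans (size_polyMleq _ _)); rewrite size_polyX /=.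
  apply: (leq_trans (size_polyD _ _)); rewrite geq_max leqnn /=.
  have [->|pn0] := eqVneq p 0; first by rewrite deriv0 size_poly0.
  exact/ltnW/lt_size_deriv.
rewrite (expPolyCoef_widen j size_euler) (@expPolyCoef_widen p N.+1 j) ?leqnSn //.
rewrite big_ord_recl coefXM eqxx mul0r add0r mulr_sumr.
under [RHS]eq_bigr do rewrite mulrCA -natrM muln_ffact natrD mulrDr.
rewrite big_split /= big_ord_recr /= [p`_N]nth_default // mul0r addr0.
rewrite big_ord_recl /= mul0n mulr0 add0r -big_split /=.
apply: eq_bigr => i _; rewrite coefXM /= coefD coef_deriv mulrDl.
by congr (_ + _); rewrite /bump /= !add0n add1n natrM -mulr_natl; ring.
Qed.

Lemma expPolyCoef_iter_euler k p j :
  expPolyCoef (iter k euler_exp p) j = j%:R ^+ k * expPolyCoef p j.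
Proof.
elim: k => [|k IH]; first by rewrite mul1r.
by rewrite iterS expPolyCoef_euler IH exprS mulrA.
Qed.

Lemma expPolyCoefXn m j : expPolyCoef ('X^m : {poly R}) j = (j ^_ m)%:R.
Proof.
rewrite /expPolyCoef size_polyXn big_ord_recr /= big1 => [|i _].
  by rewrite coefXn eqxx add0r mul1r.
by rewrite coefXn ltn_eqF // mul0r.
Qed.

Lemma expPolyCoefXsubC k j :
  expPolyCoef ('X - k%:R%:P : {poly R}) j = j%:R - k%:R.
Proof.
rewrite /expPolyCoef size_XsubC !big_ord_recl big_ord0 /= !coefB !coefX !coefC /=.
by rewrite ffactn1 ffactn0 addr0 subr0 sub0r mulr1 mul1r addrC.
Qed.

Lemma prod_iota_subr j n : \prod_(k <- iota 0 n) (j%:R - k%:R : R) = (j ^_ n)%:R.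
Proof.
elim: n => [|n IH]; first by rewrite big_nil.
rewrite -addn1 iotaD big_cat big_seq1 /= IH add0n addn1 ffactnSr natrM.
have [le_nj|lt_jn] := leqP n j; first by rewrite natrB.
by rewrite ffact_small // !mul0r.
Qed.

Lemma ssz_listE (fs : seq (nat -> R)) j : ssz_list fs j = \prod_(f <- fs) f j.
Proof. by elim: fs => [|f fs IH]; rewrite ?big_nil ?big_cons //= /ssz IH. Qed.

Lemma U_coefE l mu : (0 < l)%N ->
  U_coef l mu = expPolyCoef (iter l.-1 euler_exp 'X^(mu.+1)).
Proof.
case: l => // l _; apply/funext => j /=.
rewrite expPolyCoef_iter_euler expPolyCoefXn /U_coef ssz_listE big_cat big_map /=.
under [X in _ * X]eq_bigr do rewrite expPolyCoefXsubC.
rewrite -prod_iota_subr /= big_cons big_nseq iter_mulr_1 [in RHS]big_cons subr0.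
have := expPolyCoefXn 1 j; rewrite ffactn1 => ->.
by rewrite -exprS mulrA -exprSr.
Qed.

Lemma cvg_series_ffact_exp (x : R) i :
  series (fun j => (j ^_ i)%:R * x ^+ j / (j`!)%:R) @ \oo --> x ^+ i * expR x.
Proof.
elim: i => [|i IH].
  rewrite expr0 mul1r (_ : (fun j => _) = exp_coeff x).
    exact: is_cvg_series_exp_coeff.
  by apply/funext => j; rewrite /exp_coeff ffactn0 mul1r.
rewrite exprS -mulrA -cvg_shiftS.
suff -> : (fun n => series (fun j => (j ^_ i.+1)%:R * x ^+ j / (j`!)%:R) n.+1) =
          (fun n => x * series (fun j => (j ^_ i)%:R * x ^+ j / (j`!)%:R) n).
  exact: cvgMl_tmp.
apply/funext => n; rewrite /series /= big_nat_recl // ffact0n mul0r mul0r add0r.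
rewrite mulr_sumr; apply: eq_bigr => k _; rewrite ffactSS factS !natrM exprS.
have k1_neq0 : (k.+1%:R : R) != 0 by rewrite pnatr_eq0.
have kf_neq0 : (k`!%:R : R) != 0 by rewrite pnatr_eq0 -lt0n fact_gt0.
by field; rewrite kf_neq0 -mulrS.
Qed.

Lemma cvg_egf_expPolyCoef p (x : R) :
  egf_partial (expPolyCoef p) x @ \oo --> expR x * p.[x].
Proof.
have -> : egf_partial (expPolyCoef p) x = fun n =>
    \sum_(i < size p) p`_i * series (fun j => (j ^_ i)%:R * x ^+ j / (j`!)%:R) n.
  apply/funext => n; rewrite /egf_partial /series /= /expPolyCoef.
  under eq_bigr do rewrite mulr_suml mulr_suml.
  rewrite exchange_big /=; apply: eq_bigr => i _.
  by rewrite mulr_sumr; apply: eq_bigr => j _; ring.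
rewrite horner_coef mulr_sumr; apply: cvg_big => [|i _]; first exact: add_continuous.
rewrite (_ : expR x * _ = p`_i * (x ^+ i * expR x)); last by ring.
apply: cvgMl_tmp; exact: cvg_series_ffact_exp.
Qed.

End ExpPolyCoef.

Arguments euler_exp {R}.

Section EulerShiftRoots.
Variable R : realType.
Implicit Types (p q Z : {poly R}) (s t : seq R).

Definition euler_shift (m : nat) Z : {poly R} := ('X + m%:R%:P) * Z + 'X * Z^`().

Lemma euler_exp_XnM m Z : euler_exp ('X^m * Z) = 'X^m * euler_shift m Z.
Proof.
rewrite /euler_exp /euler_shift derivM derivXn; case: m => [|m].
  by rewrite expr0 !mul1r mulr0n mul0r add0r polyC0 addr0 mulrDr.
by rewrite /= polyC_natr -mulr_natl exprS; ring.
Qed.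

Lemma iter_euler_exp_Xn m k :
  iter k euler_exp 'X^m = 'X^m * iter k (euler_shift m) 1.
Proof.
elim: k => [|k IH]; first by rewrite mulr1.
by rewrite !iterS IH euler_exp_XnM.
Qed.

Lemma prod_subr_gt0 z s : all (fun r => r < z) s -> 0 < \prod_(r <- s) (z - r).
Proof.
elim: s => [|r s IH] /=; first by rewrite big_nil ltr01.
by case/andP => lt_rz lt_sz; rewrite big_cons mulr_gt0 ?subr_gt0 ?IH.
Qed.

Lemma sign_prod_subr_gt0 z s : all (fun r => z < r) s ->
  0 < (-1) ^+ size s * \prod_(r <- s) (z - r).
Proof.
elim: s => [|r s IH] /=; first by rewrite big_nil mul1r ltr01.
case/andP => lt_zr lt_zs; rewrite big_cons exprS mulrACA mulN1r opprB.
by rewrite mulr_gt0 ?subr_gt0 ?IH.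
Qed.

Definition alternating p s :=
  forall s1 z s2, s = s1 ++ z :: s2 -> 0 < (-1) ^+ size s2 * p.[z].

Lemma alternating_roots p x a u :
  sorted <%R (x :: a) -> all (fun z => z <= u) a -> alternating p (x :: a) ->
  exists t, [/\ size t = size a, sorted <%R t, all (root p) t,
                all (fun y => x < y) t & all (fun y => y < u) t].
Proof.
elim: a x => [|y a IH] x /= sorted_xa le_au alt_p; first by exists [::].
move/andP: sorted_xa => [lt_xy sorted_ya]; move/andP: le_au => [le_yu le_au].
have px_py_lt0 : p.[x] * p.[y] < 0.
  have := mulr_gt0 (alt_p [::] x (y :: a) erefl) (alt_p [:: x] y a erefl).
  rewrite /= exprS; set e := (-1) ^+ size a.
  have -> : -1 * e * p.[x] * (e * p.[y]) = - (p.[x] * p.[y]) * (e ^+ 2) by ring.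
  by rewrite /e -signr_odd sqrr_sign mulr1 oppr_gt0.
have [c ] := poly_ivtoo (ltW lt_xy) px_py_lt0.
rewrite in_itv /= => /andP[lt_xc lt_cy] root_c.
have [t [size_t sorted_t root_t gt_yt lt_tu]] :=
  IH y sorted_ya le_au (fun s1 z s2 e => alt_p (x :: s1) z s2 (congr1 (cons x) e)).
exists (c :: t); split => /=.
- by rewrite size_t.
- rewrite (path_sortedE lt_trans) sorted_t andbT.
  by apply: sub_all gt_yt => w /= /(lt_trans lt_cy).
- by rewrite root_c root_t.
- by rewrite lt_xc; apply: sub_all gt_yt => w /= /(lt_trans lt_xy).
- by rewrite lt_tu andbT (lt_le_trans lt_cy le_yu).
Qed.

Lemma monic_prod_XsubC_factor p t :
  p \is monic -> size p = (size t).+2 -> uniq t -> all (root p) t ->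
  exists d, p = ('X - d%:P) * \prod_(r <- t) ('X - r%:P).
Proof.
move=> mon_p size_p uniq_t root_t.
have [|q p_eq] := uniq_roots_prod_XsubC root_t; first by rewrite uniq_rootsE.
have mon_prod := monic_prod_XsubC t predT id.
have q_neq0 : q != 0.
  apply: contraTneq mon_p => q0.
  by rewrite p_eq q0 mul0r monicE lead_coef0 eq_sym oner_eq0.
have size_q : size q = 2%N.
  move: size_p; rewrite p_eq size_Mmonic // size_prod_XsubC addnS /=.
  by rewrite addnC -addn2 => /addnI.
have q1 : q`_1 = 1.
  by move: mon_p; rewrite p_eq monicE lead_coef_Mmonic // lead_coefE size_q => /eqP.
exists (- q`_0); rewrite p_eq polyCN opprK; congr (_ * _).
apply/polyP => -[|[|i]]; rewrite coefD coefX coefC //= ?q1 ?addr0 ?add0r //.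
by rewrite nth_default ?size_q // addr0.
Qed.

Lemma euler_shift_monic m Z : Z \is monic ->
  euler_shift m Z \is monic /\ size (euler_shift m Z) = (size Z).+1.
Proof.
move=> mon_Z; have Z_neq0 := monic_neq0 mon_Z.
have size_lead : size (('X + m%:R%:P) * Z) = (size Z).+1.
  by rewrite size_Mmonic // -?size_poly_eq0 size_XaddC.
have size_tail : (size ('X * Z^`())%R < (size Z).+1)%N.
  apply: (leq_ltn_trans (size_polyMleq _ _)); rewrite size_polyX /=.
  exact: lt_size_deriv.
have size_shift : size (euler_shift m Z) = (size Z).+1.
  by rewrite /euler_shift size_polyDl ?size_lead.
split=> //; rewrite monicE /euler_shift lead_coefDl ?size_lead //.
by rewrite lead_coef_Mmonic // -monicE monicXaddC.
Qed.

Lemma horner_euler_shift_root m Z z :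
  root Z z -> (euler_shift m Z).[z] = z * Z^`().[z].
Proof. by move=> /rootP Zz; rewrite /euler_shift !hornerE Zz mulr0 add0r. Qed.

Lemma horner_deriv_XsubCM z q : (('X - z%:P) * q)^`().[z] = q.[z].
Proof. by rewrite derivM derivXsubC mul1r !hornerE subrr mul0r addr0. Qed.

Lemma horner_prod_XsubC s z : (\prod_(r <- s) ('X - r%:P)).[z] = \prod_(r <- s) (z - r).
Proof. by rewrite horner_prod; apply: eq_bigr => r _; rewrite hornerXsubC. Qed.

Lemma alternating_euler_shift m s : (0 < m)%N -> sorted <%R s ->
  all (fun r => r < 0) s ->
  alternating (euler_shift m (\prod_(r <- s) ('X - r%:P))) (rcons s 0).
Proof.
move=> m_gt0 sorted_s neg_s s1 z s2; case/lastP: s2 => [|s2 w].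
  rewrite cats1 => /rcons_inj [_ <-]; rewrite expr0 mul1r /euler_shift !hornerE.
  by rewrite mulr_gt0 ?ltr0n // horner_prod_XsubC prod_subr_gt0.
rewrite -rcons_cons -rcons_cat => /rcons_inj [s_eq _]; subst s.
have z_neg : z < 0 by apply: (allP neg_s); rewrite mem_cat mem_head orbT.
move: sorted_s; rewrite (sorted_pairwise lt_trans) pairwise_cat allrel_consr /=.
case/and3P => /andP[lt_s1z _] _ /andP[lt_zs2 _].
rewrite big_cat big_cons /= mulrCA.
rewrite horner_euler_shift_root ?rootM ?root_XsubC ?eqxx //.
rewrite horner_deriv_XsubCM hornerM !horner_prod_XsubC size_rcons exprS.
set P1 := \prod_(r <- s1) _; set P2 := \prod_(r <- s2) _; set e := (-1) ^+ _.
rewrite (_ : _ * _ = - z * (P1 * (e * P2))); last by ring.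
rewrite mulr_gt0 ?oppr_gt0 // mulr_gt0 //; first exact: prod_subr_gt0.
exact: sign_prod_subr_gt0.
Qed.

Lemma euler_shift_neg_roots m s : (0 < m)%N -> sorted <%R s ->
  all (fun r => r < 0) s ->
  exists s', [/\ size s' = (size s).+1, sorted <%R s', all (fun r => r < 0) s' &
    euler_shift m (\prod_(r <- s) ('X - r%:P)) = \prod_(r <- s') ('X - r%:P)].
Proof.
move=> m_gt0 sorted_s neg_s.
have [mon_Z1 size_Z1] := euler_shift_monic m (monic_prod_XsubC s predT id).
rewrite size_prod_XsubC in size_Z1.
have alt := alternating_euler_shift m_gt0 sorted_s neg_s.
have [h [a s0_eq]] : exists h a, rcons s 0 = h :: a by case: (s); do 2 eexists.
rewrite s0_eq in alt.
have sorted_ha : sorted <%R (h :: a).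
  rewrite -s0_eq -cats1 (sorted_pairwise lt_trans) pairwise_cat allrel1r neg_s /=.
  by rewrite -(sorted_pairwise lt_trans) sorted_s.
have /andP[le_h0 le_a0] : all (fun z => z <= 0) (h :: a).
  by rewrite -s0_eq all_rcons lexx; apply: sub_all neg_s => r /ltW.
have size_a : size a = size s by have := congr1 size s0_eq; rewrite size_rcons => -[].
have [t [size_t sorted_t root_t gt_ht lt_t0]] := alternating_roots sorted_ha le_a0 alt.
have uniq_t : uniq t := sorted_uniq lt_trans ltxx sorted_t.
have [|d Z1_eq] := monic_prod_XsubC_factor mon_Z1 _ uniq_t root_t.
  by rewrite size_Z1 size_t size_a.
have lt_dh : d < h.
  have := alt [::] h a erefl; rewrite Z1_eq hornerM horner_prod_XsubC hornerXsubC.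
  by rewrite -size_t mulrCA (pmulr_lgt0 _ (sign_prod_subr_gt0 gt_ht)) subr_gt0.
exists (d :: t); split.
- by rewrite /= size_t size_a.
- rewrite /= (path_sortedE lt_trans) sorted_t andbT.
  by apply: sub_all gt_ht => w; apply: lt_trans lt_dh.
- by rewrite /= lt_t0 andbT (lt_le_trans lt_dh le_h0).
- by rewrite Z1_eq big_cons.
Qed.

Lemma iter_euler_shift_neg_roots m k : (0 < m)%N ->
  exists s, [/\ size s = k, sorted <%R s, all (fun r => r < 0) s &
    iter k (euler_shift m) 1 = \prod_(r <- s) ('X - r%:P)].
Proof.
move=> m_gt0; elim: k => [|k [s [size_s sorted_s neg_s iter_eq]]].
  by exists [::]; rewrite big_nil.
have [s' [size_s' sorted_s' neg_s' shift_eq]] :=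
  euler_shift_neg_roots m_gt0 sorted_s neg_s.
by exists s'; rewrite iterS iter_eq -size_s.
Qed.

Lemma mup_XnM_prod_XsubC n s x :
  mup x ('X^n * \prod_(r <- s) ('X - r%:P)) = ((x == 0%R) * n + count_mem x s)%N.
Proof.
have -> : 'X^n = ('X - 0%:P) ^+ n :> {poly R} by rewrite subr0.
rewrite mupM ?expf_neq0 ?polyXsubC_eq0 ?monic_neq0 ?monic_prod_XsubC //.
by rewrite mup_XsubCX mu_prod_XsubC eq_sym; case: (x == 0); rewrite ?mul1n ?mul0n.
Qed.

End EulerShiftRoots.

Theorem proposition5p1 (R : realType) (l mu : nat) (hl : (1 <= l)%N) :
  exists Y : {poly R},
    (forall x : R, egf_partial (U_coef l mu) x @ \oo --> expR x * Y.[x]) /\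
    size Y = (l + mu).+1 /\
    mup 0 Y = mu.+1 /\
    exists s : seq R,
      [/\ size s = l.-1, uniq s, all (fun r => r < 0) s &
          forall r, r \in s -> mup r Y = 1%N].
Proof.
have [s [size_s sorted_s neg_s shift_eq]] :=
  @iter_euler_shift_neg_roots R mu.+1 l.-1 (ltn0Sn mu).
have uniq_s : uniq s := sorted_uniq lt_trans ltxx sorted_s.
have notin0 : 0 \notin s by apply/negP => /(allP neg_s); rewrite ltxx.
exists ('X^(mu.+1) * \prod_(r <- s) ('X - r%:P)); split; [|split; [|split]].
- move=> x; rewrite U_coefE // iter_euler_exp_Xn shift_eq.
  exact: cvg_egf_expPolyCoef.
- rewrite size_Mmonic ?monic_prod_XsubC ?monic_neq0 ?monicXn //.
  by rewrite size_polyXn size_prod_XsubC size_s prednK //; lia.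
- rewrite mup_XnM_prod_XsubC eqxx mul1n.
  by rewrite (count_memPn notin0) addn0.
- exists s; split => // r r_s.
  by rewrite mup_XnM_prod_XsubC (lt_eqF (allP neg_s r r_s)) count_uniq_mem // r_s.
Qed.
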